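(* Let $S\subset\mathcal P$ be finite and let $\Delta$ be a bounded region of $\mathcal L_S$ with $n$ sides, with $P_k$, $D_k$ ($k\in\mathbb{Z}/n\mathbb{Z}$) as in the context. Fix $k$. Let $M$ be the line in $\mathcal P$ through $P_k$ parallel to $\overleftrightarrow{OP_{k+1}}$ (it does not pass through $O$), and for $P\in M$ let $m(P)=\overleftrightarrow{PP_{k+1}}$. Starting from $P=P_k$, move $P$ along $M$ to the right if $D_{k+1}=r$ and to the left if $D_{k+1}=l$, and let $P^*$ be the first position at which $m(P)$ contains a point of $S$ not lying on $\overleftrightarrow{P_kP_{k+1}}$. Let $Q_0=P_{k+1},Q_1,\dots,Q_q$ be the points of $m(P^* )\cap S$, indexed in the order in which they are met when starting at $Q_0$ and moving along $m(P^* )$ in the direction away from $P^*$, wrapping around through infinity to the opposite end of $m(P^* )$ if necessary. Then $P_{k+2}=Q_q$ if $D_k=D_{k+1}$, and $P_{k+2}=Q_1$ if $D_k\neq D_{k+1}$.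
   Context: $\mathcal P=\mathbb{R}^2\setminus\{(0,0)\}$ is the coefficient plane, with origin denoted $O$ (also $O$ denotes the origin of $\mathbb{R}^2$); for $P=(A,B)\in\mathcal P$, $L_P$ is the line $Ax+By=1$ in $\mathbb{R}^2$; $\mathcal L_S=\{L_P\mid P\in S\}$. For $P=(A,B),Q=(A',B')$, $Q$ is to the left of $P$ if $AB'-BA'>0$ and to the right if $AB'-BA'<0$. Moving ''to the right'' (resp. ''left'') along a line not through $O$ means moving in the direction of points that are to the right (resp. left) of the current point. For finite $S$, regions of $\mathcal L_S$ are the closures of the connected components of $\mathbb{R}^2\setminus\bigcup_{P\in S}L_P$. For a bounded region $\Delta$ with $n$ sides, $L_k$ ($k\in\mathbb{Z}/n\mathbb{Z}$) are the lines containing the sides of $\Delta$ in clockwise order around $\Delta$, $P_k\in S$ is the point with $L_{P_k}=L_k$, and $D_k\in\{l,r\}$ is the side of $L_k$ on which the origin of $\mathbb{R}^2$ lies for a traveller moving along the side of $\Delta$ on $L_k$ clockwise around $\Delta$ (with $\Delta$ on the traveller's right). *)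

(* Points of R^2 and of the
   coefficient plane are pairs [R * R] over an abstract [R : realType];
   [R * R] carries the product topology of MathComp-Analysis. *)
From HB Require Import structures.
From mathcomp Require Import all_boot all_order all_algebra.
From mathcomp Require Import all_classical all_reals topology normedtype.
Import numFieldNormedType.Exports.
Set Implicit Arguments. Unset Strict Implicit. Unset Printing Implicit Defensive.
Import Order.TTheory GRing.Theory Num.Theory.
Local Open Scope ring_scope.
Local Open Scope classical_set_scope.

Section Defs.
Variable R : realType.
Notation pt := (R * R)%type.

Definition padd (p q : pt) : pt := (p.1 + q.1, p.2 + q.2).
Definition psub (p q : pt) : pt := (p.1 - q.1, p.2 - q.2).
Definition pscale (t : R) (p : pt) : pt := (t * p.1, t * p.2).
Definition origin : pt := (0, 0).

Definition cross (p q : pt) : R := p.1 * q.2 - p.2 * q.1.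

Definition left_of (P Q : pt) : Prop := 0 < cross P Q.
Definition right_of (P Q : pt) : Prop := cross P Q < 0.

Definition lineL (P : pt) : set pt := [set x | P.1 * x.1 + P.2 * x.2 = 1].

Definition arr_union (S : seq pt) : set pt :=
  [set x | exists2 P, P \in S & lineL P x].

Definition is_region (S : seq pt) (D : set pt) : Prop :=
  exists2 x, ~ arr_union S x &
    D = closure (connected_component (~` arr_union S) x).

Definition bounded_pts (D : set pt) : Prop :=
  exists M : R, forall x, D x -> `|x.1| <= M /\ `|x.2| <= M.

Definition segment (a b : pt) : set pt :=
  [set x | exists2 t : R, 0 <= t <= 1 & x = padd a (pscale t (psub b a))].

Definition line_through (X Y : pt) : set pt :=
  [set Z | cross (psub Y X) (psub Z X) = 0].

(* [sides_cw S D n P a b] : the bounded region D of L_S has exactly the n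
   sides D /\ L_{P k} = [a k, b k] (k : 'I_n, read cyclically), P k \in S,
   listed in clockwise order: side k runs from a k to b k, its end b k is
   the start of side k+1, and D lies on the right of a traveller going from
   a k to b k. *)
Definition sides_cw (S : seq pt) (D : set pt) (n : nat)
    (P a b : 'I_n -> pt) : Prop :=
  [/\ (forall k, P k \in S) /\ injective P,
      forall k, a k <> b k /\ D `&` lineL (P k) = segment (a k) (b k),
      forall k, b k = a (ordS k),
      forall k x, D x -> cross (psub (b k) (a k)) (psub x (a k)) <= 0 &
      forall Q, Q \in S ->
        (exists x y, [/\ x <> y, (D `&` lineL Q) x & (D `&` lineL Q) y]) ->
        exists k, Q = P k].

(* D_k = r : the origin is on the right of the traveller going from a to b *)
Definition origin_right (a b : pt) : bool :=
  cross (psub b a) (psub origin a) < 0.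

(* Order in which the points X + u w (u <> 0) of the line through X with
   direction w are met when starting at X, moving in direction w and
   wrapping through infinity: first u > 0 increasing, then u < 0
   increasing.  [met_before u1 u2] : parameter u1 is met strictly before u2. *)
Definition met_before (u1 u2 : R) : bool :=
  ((0 < u1) && ((u2 < 0) || (u1 < u2))) ||
  [&& u1 < 0, u2 < 0 & u1 < u2].

Definition on_line_param (S : seq pt) (X w : pt) (Q : pt) (u : R) : Prop :=
  [/\ Q \in S, u != 0 & Q = padd X (pscale u w)].

Definition first_met (S : seq pt) (X w Q : pt) : Prop :=
  exists u, on_line_param S X w Q u /\
    forall Q' u', on_line_param S X w Q' u' -> u' = u \/ met_before u u'.

Definition last_met (S : seq pt) (X w Q : pt) : Prop :=
  exists u, on_line_param S X w Q u /\
    forall Q' u', on_line_param S X w Q' u' -> u' = u \/ met_before u' u.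

End Defs.

(* Dually, the line m(P) through P and P_{k+1} is the pencil of lines through
   the point L_P /\ L_{k+1}.  As P moves along M from P_k in the prescribed
   direction, this point runs along the side of Delta on L_{k+1}, from its
   vertex on L_k towards its vertex V on L_{k+2}.  No line of the arrangement
   crosses a side of a region, so the first hit P* is the position at which
   the point reaches V, and m(P* ) is the pencil of lines through V.  A line
   L_Q of that pencil with Q in S does not cut Delta either, so it leaves the
   far ends of the sides on L_{k+1} and L_{k+2} on the same side; in the
   parametrisation Q = P_{k+1} + u w this says that the parameter of P_{k+2}
   is extremal for the order of m(P* ), last or first according to whether
   the orientation signs D_k and D_{k+1} agree. *)

From HB Require Import structures.
From mathcomp Require Import all_boot all_order all_algebra.
From mathcomp Require Import all_classical all_reals topology normedtype.
From mathcomp Require Import ring lra.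
Import numFieldNormedType.Exports.
Import Order.TTheory GRing.Theory Num.Theory.
Local Open Scope ring_scope.
Local Open Scope classical_set_scope.

Lemma first_time_unique {R : realDomainType} {h : R -> Prop} {t1 t2 : R} :
  0 <= t1 -> 0 <= t2 -> h t1 -> h t2 ->
  (forall t, 0 <= t -> t < t1 -> ~ h t) -> (forall t, 0 <= t -> t < t2 -> ~ h t) ->
  t1 = t2.
Proof.
move=> t10 t20 h1 h2 before1 before2; apply: le_anti; rewrite !leNgt.
by apply/andP; split; apply/negP => lt; [exact: before1 _ t20 lt h2 | exact: before2 _ t10 lt h1].
Qed.

Lemma mulr_gt0_sign {R : realDomainType} {x y : R} : x != 0 -> y != 0 ->
  (0 < x * y) = ((x < 0) == (y < 0)).
Proof.
move=> x0 y0; case: (ltrgt0P x) x0 => // xs _; case: (ltrgt0P y) y0 => // ys _.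
- by rewrite mulr_gt0.
- by rewrite pmulr_rgt0 // lt_gtF.
- by rewrite nmulr_rgt0 // lt_gtF.
- by rewrite nmulr_rgt0.
Qed.

Lemma met_before_of_sign {R : realType} {g u0 u : R} :
  0 < g * u0 -> g * u * (u - u0) < 0 -> met_before u u0.
Proof.
rewrite /met_before => gu0 guu; case: (ltrgt0P u0) => u0s; last first.
- by move: gu0; rewrite u0s mulr0 ltxx.
- have g0 : g < 0 by nra.
  have uu : 0 < u * (u - u0) by nra.
  case: (ltrgt0P u) uu => us uu; last by move: uu; rewrite us mul0r ltxx.
    by [].
  by have -> : u < u0 by nra.
- have g0 : 0 < g by nra.
  have uu : u * (u - u0) < 0 by nra.
  have -> : 0 < u by nra.
  by have -> : u < u0 by nra.
Qed.

Lemma met_after_of_sign {R : realType} {g u0 u : R} :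
  g * u0 < 0 -> g * u * (u - u0) < 0 -> met_before u0 u.
Proof.
rewrite /met_before => gu0 guu; case: (ltrgt0P u0) => u0s; last first.
- by move: gu0; rewrite u0s mulr0 ltxx.
- have g0 : 0 < g by nra.
  have uu : u * (u - u0) < 0 by nra.
  have -> : u < 0 by nra.
  by have -> : u0 < u by nra.
- have g0 : g < 0 by nra.
  have uu : 0 < u * (u - u0) by nra.
  case: (ltrgt0P u) uu => us uu; last by move: uu; rewrite us mul0r ltxx.
    by have -> : u0 < u by nra.
  by [].
Qed.

Section Plane.
Context {R : realType}.
Notation pt := (R * R)%type.

Definition dot (p x : pt) : R := p.1 * x.1 + p.2 * x.2.

Lemma dotC (p x : pt) : dot p x = dot x p.
Proof. by rewrite /dot mulrC [p.2 * _]mulrC. Qed.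

Lemma dot_psubl (u v x : pt) : dot (psub u v) x = dot u x - dot v x.
Proof. by rewrite /dot /=; ring. Qed.

Lemma dot_psubr (u v x : pt) : dot x (psub u v) = dot x u - dot x v.
Proof. by rewrite /dot /=; ring. Qed.

Lemma dot_pscalel (c : R) (w x : pt) : dot (pscale c w) x = c * dot w x.
Proof. by rewrite /dot /=; ring. Qed.

Lemma dot_padd_pscalel (u w x : pt) (t : R) :
  dot (padd u (pscale t w)) x = dot u x + t * dot w x.
Proof. by rewrite /dot /=; ring. Qed.

Lemma dot_segment (u x y : pt) (s : R) :
  dot u (padd x (pscale s (psub y x))) = (1 - s) * dot u x + s * dot u y.
Proof. by rewrite /dot /=; ring. Qed.

Lemma pt_ext (x y : pt) : x.1 = y.1 -> x.2 = y.2 -> x = y.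
Proof. by case: x y => [? ?] [? ?] /= -> ->. Qed.

Lemma psub_eq0 (x y : pt) : psub x y = 0 -> x = y.
Proof.
by case=> /eqP + /eqP; rewrite !subr_eq0 => /eqP ex /eqP ey; apply: pt_ext.
Qed.

Lemma pt_neq0 (x : pt) : x <> 0 -> x.1 != 0 \/ x.2 != 0.
Proof.
move=> x0; case: (eqVneq x.1 0) => [x1|]; last by left.
by right; apply/eqP => x2; apply: x0; apply: pt_ext.
Qed.

Lemma dot_eq1_neq0r {u x : pt} : dot u x = 1 -> x <> 0.
Proof. by move=> + x0; rewrite x0 /dot /= !mulr0 addr0 => /esym/eqP; rewrite oner_eq0. Qed.

Lemma dot_eq1_neq0l {u x : pt} : dot u x = 1 -> u <> 0.
Proof. by rewrite dotC; exact: dot_eq1_neq0r. Qed.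

Lemma dot_self_gt0 {p : pt} : p <> 0 -> 0 < dot p p.
Proof.
rewrite /dot -!expr2 => /pt_neq0 [] p0.
  by rewrite ltr_pwDl ?sqr_ge0 // exprn_even_gt0.
by rewrite ltr_wpDl ?sqr_ge0 // exprn_even_gt0.
Qed.

Lemma dot_cross0 {a b x : pt} : a <> 0 -> cross a b = 0 -> dot a x = 0 -> dot b x = 0.
Proof.
rewrite /cross /dot => /pt_neq0 + ab ax => -[] a0; apply: (mulIf a0); rewrite mul0r.
- have -> : (b.1 * x.1 + b.2 * x.2) * a.1
    = b.1 * (a.1 * x.1 + a.2 * x.2) + x.2 * (a.1 * b.2 - a.2 * b.1) by ring.
  by rewrite ax ab !mulr0 addr0.
- have -> : (b.1 * x.1 + b.2 * x.2) * a.2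
    = b.2 * (a.1 * x.1 + a.2 * x.2) - x.1 * (a.1 * b.2 - a.2 * b.1) by ring.
  by rewrite ax ab !mulr0 subr0.
Qed.

Lemma cross0_dot {a b x : pt} : x <> 0 -> dot a x = 0 -> dot b x = 0 -> cross a b = 0.
Proof.
rewrite /cross /dot => /pt_neq0 + ax bx => -[] x0; apply: (mulIf x0); rewrite mul0r.
- have -> : (a.1 * b.2 - a.2 * b.1) * x.1
    = b.2 * (a.1 * x.1 + a.2 * x.2) - a.2 * (b.1 * x.1 + b.2 * x.2) by ring.
  by rewrite ax bx !mulr0 subr0.
- have -> : (a.1 * b.2 - a.2 * b.1) * x.2
    = a.1 * (b.1 * x.1 + b.2 * x.2) - b.1 * (a.1 * x.1 + a.2 * x.2) by ring.
  by rewrite ax bx !mulr0 subr0.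
Qed.

Lemma cross0_scale {w z : pt} : w <> 0 -> cross w z = 0 -> exists u, z = pscale u w.
Proof.
rewrite /cross => /pt_neq0 [] w0 wz.
- exists (z.1 / w.1); apply: pt_ext => /=; first by rewrite divfK.
  by apply: (mulIf w0); rewrite mulrAC divfK //; lra.
- exists (z.2 / w.2); apply: pt_ext => /=; last by rewrite divfK.
  by apply: (mulIf w0); rewrite mulrAC divfK //; lra.
Qed.

Lemma orth_cross0_eq0 {p d : pt} : p <> 0 -> dot p d = 0 -> cross p d = 0 -> d = 0.
Proof.
move=> /dot_self_gt0; rewrite /dot /cross => /gt_eqF/negbT pp0 pd pxd.
apply: pt_ext => /=; apply: (mulIf pp0); rewrite mul0r.
  have -> : d.1 * (p.1 * p.1 + p.2 * p.2)
    = p.1 * (p.1 * d.1 + p.2 * d.2) - p.2 * (p.1 * d.2 - p.2 * d.1) by ring.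
  by rewrite pd pxd !mulr0 subr0.
have -> : d.2 * (p.1 * p.1 + p.2 * p.2)
  = p.2 * (p.1 * d.1 + p.2 * d.2) + p.1 * (p.1 * d.2 - p.2 * d.1) by ring.
by rewrite pd pxd !mulr0 addr0.
Qed.

Lemma cross_orth (p d y : pt) : dot p d = 0 -> cross d y * dot p p = - (cross p d * dot p y).
Proof.
move=> pd; have -> : cross d y * dot p p = - (cross p d * dot p y) + dot p d * cross p y.
  by rewrite /cross /dot; ring.
by rewrite pd mul0r addr0.
Qed.

Lemma dot_orth (p q e : pt) : dot q e = 0 -> dot p e * dot q q = - (cross q e * cross p q).
Proof.
move=> qe; have -> : dot p e * dot q q = - (cross q e * cross p q) + dot q e * dot q p.
  by rewrite /cross /dot; ring.
by rewrite qe mul0r addr0.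
Qed.

Lemma eq_of_common_points {u u' x y : pt} : x <> y ->
  dot u x = 1 -> dot u y = 1 -> dot u' x = 1 -> dot u' y = 1 -> u = u'.
Proof.
move=> xy ux uy u'x u'y; apply: psub_eq0; apply: contrapT => d0.
have dxy : dot (psub u u') (psub x y) = 0 by rewrite dot_psubl !dot_psubr ux uy u'x u'y; ring.
have uxy : dot u (psub x y) = 0 by rewrite dot_psubr ux uy subrr.
have xy0 : psub x y <> 0 by move/psub_eq0.
have du := cross0_dot xy0 dxy uxy.
have dx : dot (psub u u') x = 0 by rewrite dot_psubl ux u'x subrr.
by move: (dot_cross0 d0 du dx); rewrite ux => /eqP; rewrite oner_eq0.
Qed.

Lemma line_through_dualE {u u' x : pt} (Q : pt) : u <> u' ->
  dot u x = 1 -> dot u' x = 1 -> line_through u u' Q <-> dot Q x = 1.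
Proof.
move=> uu' ux u'x; have d0 : psub u' u <> 0 by move/psub_eq0/esym.
have dx : dot (psub u' u) x = 0 by rewrite dot_psubl ux u'x subrr.
rewrite /line_through /=; split => [lQ | Qx].
  by apply/eqP; rewrite -subr_eq0 -ux -dot_psubl (dot_cross0 d0 lQ dx).
by apply: cross0_dot (dot_eq1_neq0r ux) dx _; rewrite dot_psubl Qx ux subrr.
Qed.

Lemma origin_right_lineE {p a b : pt} : dot p a = 1 -> dot p b = 1 ->
  origin_right a b = (cross p (psub b a) < 0).
Proof.
move=> pa pb; have pp := dot_self_gt0 (dot_eq1_neq0l pa).
have po : dot p (origin R) = 0 by rewrite /dot /= !mulr0 addr0.
have := cross_orth p (psub b a) (psub (origin R) a).
rewrite !dot_psubr pa pb po subrr sub0r mulrN1 opprK => /(_ erefl) E.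
by rewrite /origin_right -E pmulr_llt0.
Qed.

Lemma cross_side_ge0 {p a b x : pt} : dot p a = 1 -> dot p b = 1 ->
  cross (psub b a) (psub x a) <= 0 -> 0 <= cross p (psub b a) * (dot p x - 1).
Proof.
move=> pa pb; have pp := dot_self_gt0 (dot_eq1_neq0l pa).
have := cross_orth p (psub b a) (psub x a).
rewrite !dot_psubr pa pb subrr => /(_ erefl) E ba.
by rewrite -oppr_le0 -E pmulr_lle0.
Qed.

End Plane.

Section Region.
Context {R : realType} {S : seq (R * R)} {D : set (R * R)}.
Hypothesis regD : is_region S D.

Lemma dot_continuous (Q : R * R) : continuous (fun z => dot Q z - 1).
Proof.
move=> x; apply: cvgB; last exact: cvg_cst.
by apply: cvgD; apply: cvgM; [exact: cvg_cst|exact: cvg_fst|exact: cvg_cst|exact: cvg_snd].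
Qed.

(* The image of the component under the continuous map z |-> Q.z - 1 is
   connected, hence an interval; it would contain 0, i.e. a point of L_Q. *)
Lemma region_no_crossing {Q y1 y2 : R * R} : Q \in S -> D y1 -> D y2 ->
  0 < dot Q y1 - 1 -> dot Q y2 - 1 < 0 -> False.
Proof.
case: regD => x0 _ -> QS Dy1 Dy2 f1 f2.
set C := connected_component _ x0 in Dy1 Dy2.
set f := fun z => dot Q z - 1 in f1 f2.
have near_in y (E : set R) : closure C y -> open E -> E (f y) -> exists2 c, C c & E (f c).
  move=> Cy oE Ey; have : nbhs y (f @^-1` E).
    by apply: dot_continuous; apply: open_nbhs_nbhs.
  by move=> /Cy [c [Cc Ec]]; exists c.
have [c1 C1 fc1] := near_in _ _ Dy1 (@open_gt _ 0) f1.
have [c2 C2 fc2] := near_in _ _ Dy2 (@open_lt _ 0) f2.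
have /connected_intervalP iC : connected (f @` C).
  apply: connected_continuous_connected; first exact: component_connected.
  by apply: continuous_subspaceT => z; exact: dot_continuous.
have [c Cc fc0] : (f @` C) 0.
  by apply: (iC (f c2) (f c1)); [exists c2|exists c1|rewrite /= (ltW fc1) (ltW fc2)].
apply: (connected_component_sub Cc); exists Q => //.
by apply/eqP; rewrite -subr_eq0; apply/eqP.
Qed.

Lemma region_line_sign {Q y1 y2 : R * R} : Q \in S -> D y1 -> D y2 ->
  0 <= (dot Q y1 - 1) * (dot Q y2 - 1).
Proof.
move=> QS Dy1 Dy2; rewrite leNgt; apply/negP.
case: (ltrgt0P (dot Q y1 - 1)) => f1; case: (ltrgt0P (dot Q y2 - 1)) => f2;
  rewrite ?f1 ?f2 ?mulr0 ?mul0r ?ltxx //; try nra.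
- by move=> _; exact: region_no_crossing QS Dy1 Dy2 f1 f2.
- by move=> _; exact: region_no_crossing QS Dy2 Dy1 f2 f1.
Qed.

Lemma region_line_segment {Q y1 y2 : R * R} {s : R} : Q \in S -> D y1 -> D y2 ->
  0 <= s < 1 -> dot Q (padd y1 (pscale s (psub y2 y1))) = 1 -> dot Q y1 = 1.
Proof.
move=> QS Dy1 Dy2 /andP[s0 s1]; rewrite dot_segment => Qx.
have := region_line_sign QS Dy1 Dy2.
set f1 := dot Q y1 - 1; set f2 := dot Q y2 - 1 => f12.
have lin : (1 - s) * f1 + s * f2 = 0 by rewrite /f1 /f2; lra.
have sq0 : f1 * f1 <= 0.
  have s1' : 0 < 1 - s by rewrite subr_gt0.
  have e : (1 - s) * (f1 * f1) = - (s * (f1 * f2)).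
    by apply/eqP; rewrite -subr_eq0 opprK -(mul0r f1) -lin; apply/eqP; ring.
  by rewrite -(pmulr_rle0 _ s1') e oppr_le0 mulr_ge0.
have : f1 * f1 = 0 by apply: le_anti; rewrite sq0 -expr2 sqr_ge0.
by move/eqP; rewrite mulf_eq0 orbb subr_eq0 => /eqP.
Qed.

End Region.

Definition side_orient {R : realType} {n : nat} (P a b : 'I_n -> R * R) j :=
  cross (P j) (psub (b j) (a j)).

Section Sides.
Context {R : realType} {S : seq (R * R)} {D : set (R * R)} {n : nat}.
Context {P a b : 'I_n -> R * R}.
Hypothesis sidesD : sides_cw S D P a b.

Lemma sides_cw_mem j : P j \in S.
Proof. by case: sidesD => -[]. Qed.

Lemma sides_cw_vertex j : a (ordS j) = b j.
Proof. by case: sidesD => _ _ ->. Qed.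

Lemma sides_cw_right j {x : R * R} : D x -> cross (psub (b j) (a j)) (psub x (a j)) <= 0.
Proof. by case: sidesD => _ _ _ /(_ j x). Qed.

Lemma sides_cw_neq j : a j <> b j.
Proof. by case: sidesD => _ /(_ j) []. Qed.

Lemma sides_cw_endpoints j :
  [/\ D (a j), D (b j), dot (P j) (a j) = 1 & dot (P j) (b j) = 1].
Proof.
case: sidesD => _ /(_ j) [_ eD] _ _ _.
have [Da La] : (D `&` lineL (P j)) (a j).
  by rewrite eD; exists 0; [rewrite lexx ler01 | apply: pt_ext => /=; ring].
have [Db Lb] : (D `&` lineL (P j)) (b j).
  by rewrite eD; exists 1; [rewrite lexx ler01 | apply: pt_ext => /=; ring].
by split.
Qed.

Lemma sides_cw_vertex_neq j : b j <> b (ordS j).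
Proof. by rewrite -sides_cw_vertex; exact: sides_cw_neq. Qed.

Lemma sides_cw_normal_neq j : P j <> P (ordS j).
Proof.
case: sidesD => -[_ Pinj] _ _ _ _ /Pinj jj1; apply: (sides_cw_neq j).
by rewrite -sides_cw_vertex -jj1.
Qed.

Lemma dot_next_vertex_neq1 j : dot (P j) (b (ordS j)) != 1.
Proof.
case: (sides_cw_endpoints j) (sides_cw_endpoints (ordS j)) => _ _ _ pX [_ _].
rewrite sides_cw_vertex => qX qV; apply/eqP => pV; apply: (sides_cw_normal_neq j).
exact: eq_of_common_points (sides_cw_vertex_neq j) pX pV qX qV.
Qed.

Lemma one_sub_dot_next_vertex_neq0 j : 1 - dot (P j) (b (ordS j)) != 0.
Proof. by rewrite subr_eq0 eq_sym dot_next_vertex_neq1. Qed.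

Lemma origin_right_side j : origin_right (a j) (b j) = (side_orient P a b j < 0).
Proof. by case: (sides_cw_endpoints j) => _ _; exact: origin_right_lineE. Qed.

Lemma side_orient_neq0 j : side_orient P a b j != 0.
Proof.
case: (sides_cw_endpoints j) => _ _ pa pb; apply/eqP => s0.
apply: (sides_cw_neq j); apply/esym/psub_eq0.
apply: orth_cross0_eq0 s0; first exact: dot_eq1_neq0l pa.
by rewrite dot_psubr pa pb subrr.
Qed.

Lemma side_orient_next j : 0 < side_orient P a b j * (dot (P j) (b (ordS j)) - 1).
Proof.
case: (sides_cw_endpoints j) (sides_cw_endpoints (ordS j)) => _ _ pa pb [_ DV _ _].
have := cross_side_ge0 pa pb (sides_cw_right j DV); rewrite -/(side_orient P a b j).
rewrite le_eqVlt eq_sym mulf_eq0 => /orP [/orP [s0 | pV] | //].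
  by case: (negP (side_orient_neq0 j) s0).
by rewrite subr_eq0 in pV; case: (negP (dot_next_vertex_neq1 j) pV).
Qed.

(* Convexity of the corner at b j. *)
Lemma side_orient_corner j :
  side_orient P a b j * side_orient P a b (ordS j) * cross (P j) (P (ordS j)) < 0.
Proof.
case: (sides_cw_endpoints j) (sides_cw_endpoints (ordS j)) => _ _ _ pX [_ _].
rewrite sides_cw_vertex => qX qV.
have qq := dot_self_gt0 (dot_eq1_neq0l qX).
have := dot_orth (P j) (P (ordS j)) (psub (b (ordS j)) (b j)).
rewrite dot_psubr qX qV subrr dot_psubr pX => /(_ erefl) E.
have := side_orient_next j; rewrite -(pmulr_lgt0 _ qq) -[_ * _ * dot _ _]mulrA E.
by rewrite /side_orient sides_cw_vertex mulrN oppr_gt0 mulrA.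
Qed.

End Sides.

Definition pstar {R : realType} (p q V : R * R) : R * R := padd p (pscale (1 - dot p V) q).

Definition sweep_hit {R : realType} (S : seq (R * R)) (p q v : R * R) (t : R) : Prop :=
  exists2 Q, Q \in S & line_through (padd p (pscale t v)) q Q /\ ~ line_through p q Q.

Definition vertex_time {R : realType} (p V : R * R) (eps : R) : R := (1 - dot p V) / eps.

Section Corner.
Context {R : realType} {S : seq (R * R)} {D : set (R * R)} {n : nat}.
Context {P a b : 'I_n -> R * R}.
Hypotheses (regD : is_region S D) (sidesD : sides_cw S D P a b).
Variable k : 'I_n.
Local Notation k1 := (ordS k).
Local Notation p := (P k).
Local Notation q := (P k1).
Local Notation r := (P (ordS k1)).
Local Notation X := (b k).
Local Notation V := (b k1).
Local Notation Y := (b (ordS k1)).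

Lemma corner_incidences :
  [/\ dot p X = 1, dot q X = 1, dot q V = 1, dot r V = 1 & dot r Y = 1].
Proof.
case: (sides_cw_endpoints sidesD k) => _ _ _ pX.
case: (sides_cw_endpoints sidesD k1); rewrite (sides_cw_vertex sidesD) => _ _ qX qV.
by case: (sides_cw_endpoints sidesD (ordS k1)); rewrite (sides_cw_vertex sidesD).
Qed.

Lemma line_through_normalsE Q : line_through p q Q <-> dot Q X = 1.
Proof.
case: corner_incidences => pX qX _ _ _.
exact: line_through_dualE (sides_cw_normal_neq sidesD k) pX qX.
Qed.

Lemma dot_pstar x : dot (pstar p q V) x = dot p x + (1 - dot p V) * dot q x.
Proof. exact: dot_padd_pscalel. Qed.

Lemma dot_pstar_vertex : dot (pstar p q V) V = 1.
Proof. by case: corner_incidences => _ _ qV _ _; rewrite dot_pstar qV; ring. Qed.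

Lemma pstar_neq : pstar p q V <> q.
Proof.
case: corner_incidences => pX qX _ _ _ eq_q.
have pV : dot p V = 1 by move: (dot_pstar X); rewrite eq_q pX qX mulr1; lra.
by move: (dot_next_vertex_neq1 sidesD k); rewrite pV eqxx.
Qed.

Section Sweep.
Context {v : R * R} {eps : R}.
Hypotheses (v_eq : v = pscale eps q) (eps0 : eps != 0).

Lemma dot_sweep t x : dot (padd p (pscale t v)) x = dot p x + t * eps * dot q x.
Proof. by rewrite dot_padd_pscalel v_eq dot_pscalel mulrA. Qed.

Lemma pos_vertex_time : padd p (pscale (vertex_time p V eps) v) = pstar p q V.
Proof. by rewrite v_eq; apply: pt_ext; rewrite /= /vertex_time mulrA divfK. Qed.

Lemma sweep_neq t : padd p (pscale t v) <> q.
Proof.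
case: corner_incidences => pX qX _ _ _ eq_q.
have : t * eps = 0 by move: (dot_sweep t X); rewrite eq_q pX qX mulr1; lra.
move/eqP; rewrite mulf_eq0 (negbTE eps0) orbF => /eqP t0.
apply: (sides_cw_normal_neq sidesD k).
by rewrite -eq_q t0; apply: pt_ext => /=; rewrite mul0r addr0.
Qed.

(* The turning hypothesis fixes the sign of eps * cross p q, and the convex
   corner at X turns this into the statement that L_P /\ L_q moves from X
   towards V. *)
Lemma vertex_time_gt0 :
  (if origin_right (a k1) (b k1) then right_of (padd p (pscale 0 v)) (padd p (pscale 1 v))
   else left_of (padd p (pscale 0 v)) (padd p (pscale 1 v))) ->
  0 < vertex_time p V eps.
Proof.
rewrite /right_of /left_of (origin_right_side sidesD).
have -> : cross (padd p (pscale 0 v)) (padd p (pscale 1 v)) = eps * cross p q.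
  by rewrite v_eq /cross /=; ring.
move=> turn.
have corner := side_orient_corner sidesD k.
have next := side_orient_next sidesD k.
have sk10 := side_orient_neq0 sidesD k1.
set sk := side_orient P a b k in corner next; set sk1 := side_orient P a b k1 in turn corner sk10.
set c := cross p q in turn corner.
have turn' : 0 < eps * c * sk1.
  by case: ltrP turn => sk1s turn; nra.
have eps_sk : eps * sk < 0.
  have csk1 : 0 < (c * sk1) ^+ 2.
    by rewrite exprn_even_gt0 //; apply: contraTneq turn' => h; rewrite -mulrA h mulr0 ltxx.
  rewrite -(pmulr_llt0 _ csk1).
  have -> : eps * sk * (c * sk1) ^+ 2 = (eps * c * sk1) * (sk * sk1 * c) by ring.
  by rewrite pmulr_rlt0.
rewrite /vertex_time; case: (ltrgt0P sk) next eps_sk => sks next eps_sk.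
- have epsn : eps < 0 by nra.
  by rewrite -divrNN divr_gt0 ?oppr_gt0 //; nra.
- have epsp : 0 < eps by nra.
  by rewrite divr_gt0 //; nra.
- by move: next; rewrite sks mul0r ltxx.
Qed.

Lemma sweep_hit_vertex : sweep_hit S p q v (vertex_time p V eps).
Proof.
case: corner_incidences => _ qX qV rV _.
exists r; first exact: sides_cw_mem sidesD _.
rewrite pos_vertex_time line_through_normalsE; split => [|rX].
  exact/(line_through_dualE _ pstar_neq dot_pstar_vertex qV).
apply: (sides_cw_normal_neq sidesD k1).
exact: eq_of_common_points (sides_cw_vertex_neq sidesD k) qX qV rX rV.
Qed.

(* For 0 <= t < vertex_time the line m(P) passes through the point of the
   side k+1 at parameter t / vertex_time from b k, which a line of the
   arrangement other than those through b k cannot meet. *)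
Lemma sweep_no_hit t : 0 <= t -> t < vertex_time p V eps -> ~ sweep_hit S p q v t.
Proof.
case: corner_incidences => pX qX qV _ _ t0 ttV [Q QS [onm not_pq]].
apply: not_pq; apply/line_through_normalsE.
have tV0 : 0 < vertex_time p V eps := le_lt_trans t0 ttV.
case: (sides_cw_endpoints sidesD k) (sides_cw_endpoints sidesD k1) => _ DX _ _ [_ DV _ _].
set s := t / vertex_time p V eps.
apply: (region_line_segment (s := s) regD QS DX DV).
  by rewrite divr_ge0 ?(ltW tV0) //= ltr_pdivrMr // mul1r.
have qx : dot q (padd X (pscale s (psub V X))) = 1.
  by rewrite dot_segment qX qV; ring.
have posx : dot (padd p (pscale t v)) (padd X (pscale s (psub V X))) = 1.
  rewrite dot_sweep !dot_segment pX qX qV /s /vertex_time; field.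
  by rewrite (one_sub_dot_next_vertex_neq0 sidesD) eps0.
exact/(line_through_dualE Q (sweep_neq t) posx qx).
Qed.

End Sweep.

Local Notation W := (psub q (pstar p q V)).

Lemma dot_pencil u x : dot (padd q (pscale u W)) x = dot q x + u * dot W x.
Proof. exact: dot_padd_pscalel. Qed.

Lemma next_normal_on_pencil : exists2 u2, r = padd q (pscale u2 W) & u2 != 0.
Proof.
case: corner_incidences => _ _ qV rV _.
have WV : dot W V = 0 by rewrite dot_psubl dot_pstar qV; ring.
have rqV : dot (psub r q) V = 0 by rewrite dot_psubl rV qV subrr.
have W0 : W <> 0 by move/psub_eq0/esym; exact: pstar_neq.
have [u2 ru2] := cross0_scale W0 (cross0_dot (dot_eq1_neq0r qV) WV rqV).
have r_eq : r = padd q (pscale u2 W).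
  by apply: pt_ext; move: ru2 => [+ +] /=; lra.
exists u2 => //; apply/eqP => u20; apply: (sides_cw_normal_neq sidesD k1).
by rewrite r_eq u20; apply: pt_ext => /=; rewrite mul0r addr0.
Qed.

Section NextNormal.
Context {u2 : R}.
Hypothesis r_eq : r = padd q (pscale u2 W).

Lemma dot_normal_next_vertex : dot q Y = 1 - u2 * dot W Y.
Proof. by case: corner_incidences => _ _ _ _ rY; move: rY; rewrite r_eq dot_pencil; lra. Qed.

Lemma pencil_order Q u : on_line_param S q W Q u ->
  u = u2 \/ (1 - dot p V) * dot W Y * u * (u - u2) < 0.
Proof.
move=> [QS u0 Q_eq]; have [->|uu2] := eqVneq u u2; [by left | right].
case: corner_incidences => pX qX _ _ _.
case: (sides_cw_endpoints sidesD k) (sides_cw_endpoints sidesD (ordS k1)) => _ DX _ _ [_ DY _ _].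
have WX : dot W X = dot p V - 1 by rewrite dot_psubl dot_pstar pX qX; ring.
have := region_line_sign regD QS DX DY.
have -> : (dot Q X - 1) * (dot Q Y - 1) = - ((1 - dot p V) * dot W Y * u * (u - u2)).
  by rewrite Q_eq !dot_pencil qX WX dot_normal_next_vertex; ring.
have delta0 := one_sub_dot_next_vertex_neq0 sidesD k.
have WY0 : dot W Y != 0.
  apply: contraTneq (side_orient_next sidesD k1) => WY0.
  by rewrite dot_normal_next_vertex WY0 mulr0 subr0 subrr mulr0 ltxx.
have nz : (1 - dot p V) * dot W Y * u * (u - u2) != 0.
  by rewrite !mulf_neq0 // subr_eq0.
by rewrite oppr_ge0 le_eqVlt (negbTE nz).
Qed.

Lemma pencil_last_sign :
  0 < (1 - dot p V) * dot W Y * u2 * (side_orient P a b k * side_orient P a b k1).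
Proof.
have -> : (1 - dot p V) * dot W Y * u2 * (side_orient P a b k * side_orient P a b k1)
    = side_orient P a b k * (dot p V - 1) * (side_orient P a b k1 * (dot q Y - 1)).
  by rewrite dot_normal_next_vertex; ring.
by rewrite mulr_gt0 ?(side_orient_next sidesD).
Qed.

End NextNormal.
End Corner.

Theorem theorem3p13 (R : realType) (S : seq (R * R)%type) (D : set (R * R)%type)
  (n : nat) (P a b : 'I_n -> (R * R)%type) (k : 'I_n)
  (v : (R * R)%type) (tstar : R) :
  origin R \notin S ->
  is_region S D -> bounded_pts D ->
  sides_cw S D P a b ->
  let k1 := ordS k in
  let k2 := ordS k1 in
  let Dk := origin_right (a k) (b k) in
  let Dk1 := origin_right (a k1) (b k1) in
  (v = P k1 \/ v = pscale (-1) (P k1)) ->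
  let pos := fun t : R => padd (P k) (pscale t v) in
  (forall t t' : R, 0 <= t -> t < t' ->
     if Dk1 then right_of (pos t) (pos t') else left_of (pos t) (pos t')) ->
  let hit := fun t : R => exists2 Q, Q \in S &
      line_through (pos t) (P k1) Q /\ ~ line_through (P k) (P k1) Q in
  0 <= tstar -> hit tstar -> (forall t, 0 <= t -> t < tstar -> ~ hit t) ->
  let w := psub (P k1) (pos tstar) in
  (if Dk == Dk1 then last_met S (P k1) w (P k2)
   else first_met S (P k1) w (P k2)).
Proof.
move=> _ regD _ sidesD k1 k2 Dk Dk1 hv pos turn hit t0 hit_t first_t w.
have [eps v_eq eps0] : exists2 eps, v = pscale eps (P k1) & eps != 0.
  case: hv => ->; [exists 1 | exists (-1)]; rewrite ?oppr_eq0 ?oner_eq0 //.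
  by apply: pt_ext; rewrite /= mul1r.
have tV0 := vertex_time_gt0 sidesD k v_eq (turn 0 1 (lexx 0) ltr01).
have t_eq : tstar = vertex_time (P k) (b k1) eps.
  exact: first_time_unique t0 (ltW tV0) hit_t (sweep_hit_vertex sidesD k v_eq eps0)
    first_t (sweep_no_hit regD sidesD k v_eq eps0).
rewrite /w /pos /= t_eq (pos_vertex_time k v_eq eps0).
have [u2 r_eq u20] := next_normal_on_pencil sidesD k.
have last := pencil_last_sign sidesD k r_eq.
have sk0 := side_orient_neq0 sidesD k; have sk10 := side_orient_neq0 sidesD k1.
rewrite /Dk /Dk1 !(origin_right_side sidesD) -mulr_gt0_sign //.
case: ifP last => same last; exists u2.
all: split; first by split; rewrite ?(sides_cw_mem sidesD).
all: move=> Q u /(pencil_order regD sidesD k r_eq).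
- case=> [->|order]; [left | right] => //.
  by apply: met_before_of_sign order; rewrite -(pmulr_lgt0 _ same).
- case=> [->|order]; [left | right] => //.
  have opposite : side_orient P a b k * side_orient P a b k1 < 0.
    by rewrite ltNge le_eqVlt same orbF eq_sym mulf_neq0.
  by apply: met_after_of_sign order; rewrite -(nmulr_lgt0 _ opposite).
Qed.
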